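(* Let $\mathcal{C}$ be a finite set of classes and let $\ell_\star, \ell_a, \ell_b$ be $\mathcal{C}$-valued random variables on a common probability space, where $\ell_\star$ is the oracle label and $\ell_a, \ell_b$ are two predicted labels. Assume that for every $\mathcal{C}$-valued random variable $\ell_\times$ on this space with $\ell_\times \ne \ell_\star$ almost surely (an incorrect label), $$\mathbb{P}(\ell_b = \ell_\star \mid \ell_a \ne \ell_\star) \ge \mathbb{P}(\ell_b = \ell_\times \mid \ell_a \ne \ell_\star).$$ Then $\mathcal{L} := \mathbb{P}(\ell_a = \ell_b) \le \mathbb{P}(\ell_b = \ell_\star)$.
   Context: Conditional probabilities given an event of probability zero are taken to be $0$. *)

From HB Require Import structures.
From mathcomp Require Import all_boot all_order all_algebra.
From mathcomp Require Import all_classical all_reals all_analysis.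
Set Implicit Arguments. Unset Strict Implicit. Unset Printing Implicit Defensive.
Import Order.TTheory GRing.Theory Num.Theory.
Local Open Scope classical_set_scope.
Local Open Scope ring_scope.

(** A C-valued random variable (C finite, discrete sigma-algebra):
    every level set is measurable. *)
Definition label_rv (d : measure_display) (T : measurableType d) (C : finType)
  (l : T -> C) : Prop := forall c : C, measurable (l @^-1` [set c]).

Definition prob (d : measure_display) (T : measurableType d) (R : realType)
  (P : probability T R) (A : set T) : R := fine (P A).

(** Conditional probability P(A | B), taken to be 0 when P(B) = 0. *)
Definition cprob (d : measure_display) (T : measurableType d) (R : realType)
  (P : probability T R) (A B : set T) : R :=
  if prob P B == 0 then 0 else prob P (A `&` B) / prob P B.

From HB Require Import structures.
From mathcomp Require Import all_boot all_order all_algebra.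
From mathcomp Require Import all_classical all_reals all_analysis.
Set Implicit Arguments. Unset Strict Implicit. Unset Printing Implicit Defensive.
Import Order.TTheory GRing.Theory Num.Theory.
Local Open Scope classical_set_scope.
Local Open Scope ring_scope.

(* Split the sample space along the error event E = {la <> ls}. Off E the
   events {la = lb} and {lb = ls} coincide. On E, the label lx that equals la
   on E and is any other wrong class off E is an incorrect label, and
   {lb = lx} agrees with {la = lb} on E; so the hypothesis for lx, multiplied
   by P(E), bounds P(la = lb, E) by P(lb = ls, E). *)

Section LabelMeasurability.
Variables (d : measure_display) (T : measurableType d).

Lemma label_rv_preimage (C : finType) (A : set C) (f : T -> C) :
  label_rv f -> measurable (f @^-1` A).
Proof.
move=> mf.
have -> : f @^-1` A = \bigcup_(c in A) f @^-1` [set c].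
  by apply/seteqP; split=> [x Afx|x [c Ac /= ->]]; [exists (f x)|].
by apply: fin_bigcup_measurable => //; exact: finite_finset.
Qed.

Lemma label_rv_comp (C C' : finType) (g : C -> C') (f : T -> C) :
  label_rv f -> label_rv (g \o f).
Proof. by move=> mf c; exact: (label_rv_preimage (g @^-1` [set c]) mf). Qed.

Lemma label_rv_pair (C C' : finType) (f : T -> C) (g : T -> C') :
  label_rv f -> label_rv g -> label_rv (fun x => (f x, g x)).
Proof.
move=> mf mg [a b].
have -> : (fun x => (f x, g x)) @^-1` [set (a, b)] =
          f @^-1` [set a] `&` g @^-1` [set b].
  by apply/seteqP; split=> x /= => [[-> ->]|[-> ->]].
exact: measurableI.
Qed.

Lemma label_rv_relation (C C' : finType) (f : T -> C) (g : T -> C')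
    (r : C -> C' -> Prop) :
  label_rv f -> label_rv g -> measurable [set x | r (f x) (g x)].
Proof.
move=> mf mg.
exact: (label_rv_preimage [set p | r p.1 p.2] (label_rv_pair mf mg)).
Qed.

End LabelMeasurability.

Section Probability.
Variables (d : measure_display) (T : measurableType d) (R : realType).
Variable P : probability T R.

Lemma prob_ge0 (A : set T) : 0 <= prob P A.
Proof. exact/fine_ge0/measure_ge0. Qed.

Lemma le_prob (A B : set T) :
  measurable A -> measurable B -> A `<=` B -> prob P A <= prob P B.
Proof.
move=> mA mB AB.
by apply: fine_le; rewrite ?fin_num_measure// le_measure// inE.
Qed.

Lemma probID (A B : set T) :
  measurable A -> measurable B ->
  prob P A = prob P (A `&` B) + prob P (A `&` ~` B).
Proof.
move=> mA mB; rewrite /prob (measureDI P mA mB) addrC.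
have mAB : measurable (A `&` B) by exact: measurableI.
have mAnB : measurable (A `\` B) by exact: measurableD.
by rewrite fineD// fin_num_measure.
Qed.

(* The convention cprob P _ B = 0 when P(B) = 0 is harmless: then both joint
   probabilities vanish. *)
Lemma le_prob_setI_cprob (A A' B : set T) :
  measurable A -> measurable B ->
  cprob P A B <= cprob P A' B -> prob P (A `&` B) <= prob P (A' `&` B).
Proof.
move=> mA mB; rewrite /cprob; case: eqP => [PB0 _|PB0].
  apply: le_trans (prob_ge0 _); rewrite -PB0.
  by apply: le_prob => //; exact: measurableI.
have PB_gt0 : 0 < prob P B by rewrite lt0r prob_ge0 andbT; apply/eqP.
by rewrite ler_pM2r // invr_gt0.
Qed.

End Probability.

Section IncorrectLabel.
Variables (T : Type) (C : finType) (c0 c1 : C) (ls la : T -> C).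

Definition incorrect_label (x : T) : C :=
  if la x != ls x then la x else if ls x == c0 then c1 else c0.

Lemma incorrect_label_neq x : c0 != c1 -> incorrect_label x <> ls x.
Proof.
rewrite /incorrect_label => c01; case: ifPn => [/eqP //|_].
case: ifPn => [/eqP -> c10|ls_neq0 c0_ls].
  by move: c01; rewrite c10 eqxx.
by move: ls_neq0; rewrite c0_ls eqxx.
Qed.

Lemma incorrect_label_on_error x : la x <> ls x -> incorrect_label x = la x.
Proof. by rewrite /incorrect_label => /eqP ->. Qed.

End IncorrectLabel.

Lemma label_rv_incorrect_label (d : measure_display) (T : measurableType d)
    (C : finType) (c0 c1 : C) (ls la : T -> C) :
  label_rv ls -> label_rv la -> label_rv (incorrect_label c0 c1 ls la).
Proof.
move=> ms ma.
exact: (label_rv_comp (fun p => if p.2 != p.1 then p.2 else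
  if p.1 == c0 then c1 else c0) (label_rv_pair ms ma)).
Qed.

Lemma agreement_off_error (T C : Type) (ls la lb : T -> C) :
  [set x | la x = lb x] `&` ~` [set x | la x <> ls x] =
  [set x | lb x = ls x] `&` ~` [set x | la x <> ls x].
Proof.
apply/seteqP; split=> x [/= eq_ab /contrapT eq_as]; split=> //=.
  by rewrite -eq_ab.
by rewrite eq_as.
Qed.

Lemma agreement_on_error_le (d : measure_display) (T : measurableType d)
    (R : realType) (P : probability T R) (C : finType) (ls la lb : T -> C) :
  label_rv ls -> label_rv la -> label_rv lb ->
  (forall lx : T -> C, label_rv lx ->
     {ae P, forall x, lx x <> ls x} ->
     cprob P [set x | lb x = lx x] [set x | la x <> ls x] <=
     cprob P [set x | lb x = ls x] [set x | la x <> ls x]) ->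
  prob P ([set x | la x = lb x] `&` [set x | la x <> ls x]) <=
  prob P ([set x | lb x = ls x] `&` [set x | la x <> ls x]).
Proof.
move=> ms ma mb lx_worse.
have [[x0 err0]|no_err] := pselect (exists x, la x <> ls x); last first.
  have -> : [set x | la x <> ls x] = set0.
    by apply/seteqP; split=> x // err; apply: no_err; exists x.
  by rewrite !setI0.
pose lx := incorrect_label (ls x0) (la x0) ls la.
have lx_wrong x : lx x <> ls x.
  by apply: incorrect_label_neq; apply/eqP => /esym.
have lx_on_error : [set x | lb x = lx x] `&` [set x | la x <> ls x] =
                   [set x | la x = lb x] `&` [set x | la x <> ls x].
  apply/seteqP; split=> x [/= eq_b err]; split=> //=.
    by rewrite eq_b /lx incorrect_label_on_error.
  by rewrite -eq_b /lx incorrect_label_on_error.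
have mlx : label_rv lx by exact: label_rv_incorrect_label _ _ ms ma.
have mE : measurable [set x | la x <> ls x].
  exact: label_rv_relation (fun a b => a <> b) ma ms.
have mbx : measurable [set x | lb x = lx x].
  exact: label_rv_relation eq mb mlx.
rewrite -lx_on_error.
exact: le_prob_setI_cprob mbx mE (lx_worse lx mlx (aeW _ lx_wrong)).
Qed.

Theorem theorem3 (d : measure_display) (T : measurableType d) (R : realType)
  (P : probability T R) (C : finType) (ls la lb : T -> C) :
  label_rv ls -> label_rv la -> label_rv lb ->
  (forall lx : T -> C, label_rv lx ->
     {ae P, forall x, lx x <> ls x} ->
     cprob P [set x | lb x = lx x] [set x | la x <> ls x] <=
     cprob P [set x | lb x = ls x] [set x | la x <> ls x]) ->
  prob P [set x | la x = lb x] <= prob P [set x | lb x = ls x].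
Proof.
move=> ms ma mb lx_worse.
have mE : measurable [set x | la x <> ls x].
  exact: label_rv_relation (fun a b => a <> b) ma ms.
have mab : measurable [set x | la x = lb x].
  exact: label_rv_relation eq ma mb.
have mbs : measurable [set x | lb x = ls x].
  exact: label_rv_relation eq mb ms.
rewrite (probID P mab mE) (probID P mbs mE) agreement_off_error lerD2r.
exact: agreement_on_error_le.
Qed.
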